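(* Let $q$ be an odd prime and let $(G,H,T)$ be the envelope of a right conjugacy closed loop of order $2q$. Let $K$ be a subgroup with $H\lneq K\lneq G$, $|G:K|=q$ and $|K:H|=2$. If $K\trianglelefteq G$, then $G$ is abelian and $H=1$.
   Context: For a finite loop $\mathcal{L}$ with identity $e$: $G=\langle R_a\mid a\in\mathcal L\rangle$ with $R_a\colon x\mapsto xa$, $H$ the stabilizer of $e$ in $G$, $T=\{R_a\}$; $(G,H,T)$ is the envelope; the loop is right conjugacy closed if $T$ is a union of conjugacy classes of $G$. *)

From mathcomp Require Import all_boot all_order all_algebra all_fingroup.
Set Implicit Arguments. Unset Strict Implicit. Unset Printing Implicit Defensive.
Import GroupScope.

Definition is_loop (L : finType) (mul : L -> L -> L) (e : L) : Prop :=
  [/\ forall x, mul e x = x /\ mul x e = x,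
      forall a, bijective (fun x => mul a x) &
      forall a, bijective (fun x => mul x a)].

Definition rtrans (L : finType) (mul : L -> L -> L) : {set {perm L}} :=
  [set p : {perm L} | [exists a : L, [forall x : L, p x == mul x a]]].

Definition env_G (L : finType) (mul : L -> L -> L) : {group {perm L}} :=
  <<rtrans mul>>%G.

Definition env_H (L : finType) (mul : L -> L -> L) (e : L) : {group {perm L}} :=
  'C_(env_G mul)[e | 'P]%G.

Definition rcc (L : finType) (mul : L -> L -> L) : Prop :=
  forall t, t \in rtrans mul -> t ^: env_G mul \subset rtrans mul.

(* G acts transitively on L with point stabilizer H, so no nontrivial
   subgroup of H is normalized by G. As G/K is cyclic, every commutator lies
   in K. For t in T, a conjugate t^g is again in T, hence determined by its
   value at e, and t^-1 ((t^g) e) = [g, t^-1] e lies in the K-orbit of e,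
   which has |K : H| = 2 points. Hence every class of G meeting T has at most
   two elements, so squares of elements of G centralize T, and thus G. An
   element z of order q is a power of z^2, so it is central; it lies outside
   K, for otherwise z^2, hence z, would lie in the core of H. Then G = K <z>
   normalizes H, so H = 1, |K| = 2 and G = K x <z> is abelian. *)

From mathcomp Require Import all_boot all_order all_algebra.
From mathcomp Require Import all_fingroup all_solvable.
Set Implicit Arguments.
Unset Strict Implicit.
Unset Printing Implicit Defensive.

Import GroupScope.

Section GroupFacts.

Variable gT : finGroupType.
Implicit Types (A B G K : {group gT}) (x z : gT).

Lemma expg2_index_le2 A B x :
  A \subset B -> #|B : A| <= 2 -> x \in B -> x ^+ 2 \in A.
Proof.
move=> sAB iAB Bx; have := indexg_gt0 B A.
case iBA: #|B : A| iAB => [|[|[|n]]] // _ _.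
  by rewrite (index1g sAB iBA) groupX.
case Ax: (x \in A); first by rewrite groupX.
have BAx : x \in B :\: A by rewrite inE Ax Bx.
apply/negPn/negP => notAx2.
have : x ^+ 2 \in B :\: A by rewrite inE notAx2 groupX.
rewrite -(rcoset_index2 sAB iBA BAx) => /rcosetP[a Aa].
by rewrite expgS expg1 => /(mulIg x) def_x; rewrite def_x Aa in Ax.
Qed.

Lemma expg2_cent1 G x g : #|x ^: G| <= 2 -> g \in G -> g ^+ 2 \in 'C[x].
Proof.
move=> le_xG_2 Gg.
have /setIP[] // : g ^+ 2 \in 'C_G[x].
by apply: expg2_index_le2 Gg; rewrite ?subsetIl ?index_cent1.
Qed.

Lemma cycleX2_odd z : odd #[z] -> <[z ^+ 2]> = <[z]>.
Proof.
move=> odd_z; apply/esym/eqP.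
by rewrite -[_ == _]/(generator _ _) generator_coprime coprimen2.
Qed.

Lemma mulg_cycle_prime_index K G z :
  K \subset G -> prime #[z] -> #|G : K| = #[z] -> z \in G -> z \notin K ->
  K * <[z]> = G.
Proof.
move=> sKG pr_z iGK Gz notKz.
have tiKz : K :&: <[z]> = 1.
  by rewrite setIC prime_TIg -?orderE // cycle_subG.
apply/eqP; rewrite eqEcard mul_subG ?cycle_subG //= TI_cardMg //.
by rewrite -orderE -iGK Lagrange.
Qed.

End GroupFacts.

Lemma trivg_norm_sub_astab1 (L : finType) (G N : {group {perm L}}) x :
  (forall y, exists2 g, g \in G & g x = y) ->
  N \subset 'C[x | 'P] -> G \subset 'N(N) -> N :=: 1.
Proof.
move=> transG sNCx nNG; apply/trivgP/subsetP => h Nh; rewrite inE.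
apply/eqP/permP => y; have [g Gg <-] := transG y.
have /(subsetP sNCx)/astab1P : h ^ g^-1 \in N.
  by rewrite memJ_norm // (subsetP nNG) ?groupV.
rewrite /= /aperm conjgE invgK !permM => /(congr1 g).
by rewrite permKV perm1.
Qed.

Section Envelope.

Variables (L : finType) (mul : L -> L -> L) (e : L).
Hypothesis loop_L : is_loop mul e.

Local Notation T := (rtrans mul).
Local Notation G := (env_G mul).
Local Notation H := (env_H mul e).

Lemma rtransP (u : {perm L}) :
  reflect (exists a, forall x, u x = mul x a) (u \in T).
Proof.
rewrite inE; apply: (iffP existsP) => -[a Ha]; exists a.
  by move=> x; apply/eqP/(forallP Ha).
by apply/forallP => x; rewrite Ha.
Qed.

Lemma rtrans_sub_env : T \subset G.
Proof. exact: subset_gen. Qed.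

Lemma env_transitive x : exists2 g, g \in G & g e = x.
Proof.
have [idL _ bijR] := loop_L.
have injRx : injective (fun y => mul y x) by apply: bij_inj.
exists (perm injRx); last by rewrite permE (proj1 (idL x)).
by apply/(subsetP rtrans_sub_env)/rtransP; exists x => y; rewrite permE.
Qed.

Lemma rtrans_inj_at_e : {in T &, injective (fun u : {perm L} => u e)}.
Proof.
have [idL _ _] := loop_L.
move=> u v /rtransP[a Ha] /rtransP[b Hb] /=.
rewrite Ha Hb !(proj1 (idL _)) => eq_ab.
by apply/permP => x; rewrite Ha Hb eq_ab.
Qed.

Lemma trivg_env_core (N : {group {perm L}}) :
  N \subset H -> G \subset 'N(N) -> N :=: 1.
Proof.
move=> sNH; apply: trivg_norm_sub_astab1 env_transitive _.
exact: subset_trans sNH (subsetIr _ _).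
Qed.

Lemma card_orbit_env (K : {group {perm L}}) :
  K \subset G -> #|orbit 'P K e| = #|K : H|.
Proof.
by move=> sKG; rewrite card_orbit -[RHS]indexgI /= setIA (setIidPl sKG).
Qed.

Hypothesis rcc_L : rcc mul.

Lemma rcc_card_class (K : {group {perm L}}) t :
  K \subset G -> [~: G, G] \subset K -> t \in T -> #|t ^: G| <= #|K : H|.
Proof.
move=> sKG sG'K Tt; rewrite -card_orbit_env //.
have sTG_T := rcc_L Tt.
rewrite -(@card_in_imset _ _ (fun u : {perm L} => t^-1 (u e))); last first.
  move=> u v /(subsetP sTG_T) Tu /(subsetP sTG_T) Tv /= /perm_inj.
  exact: rtrans_inj_at_e.
apply/subset_leq_card/subsetP => _ /imsetP[_ /imsetP[g Gg ->] ->].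
have -> : t^-1 ((t ^ g) e) = [~ g, t^-1] e.
  by rewrite -permM commgEl !conjgE invgK !mulgA.
apply: mem_orbit; apply: (subsetP sG'K); apply: mem_commg => //.
by rewrite groupV (subsetP rtrans_sub_env).
Qed.

Lemma rcc_expg2_cent (K : {group {perm L}}) g :
  K \subset G -> [~: G, G] \subset K -> #|K : H| <= 2 -> g \in G ->
  g ^+ 2 \in 'C(G).
Proof.
move=> sKG sG'K iKH Gg; rewrite cent_gen; apply/centP => t Tt.
apply/cent1P; apply: expg2_cent1 Gg.
by apply: leq_trans iKH; apply: rcc_card_class.
Qed.

End Envelope.

Theorem lemma5p11 (q : nat) (L : finType) (mul : L -> L -> L) (e : L)
    (K : {group {perm L}}) :
  prime q -> odd q ->
  is_loop mul e -> rcc mul -> #|L| = (2 * q)%N ->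
  env_H mul e \proper K -> K \proper env_G mul ->
  #|env_G mul : K| = q -> #|K : env_H mul e| = 2 ->
  K <| env_G mul ->
  abelian (env_G mul) /\ env_H mul e = 1%G.
Proof.
move=> pr_q odd_q loop_L rcc_L _ /proper_sub sHK /proper_sub sKG iGK iKH nKG.
set G := env_G mul in sKG iGK nKG *; set H := env_H mul e in sHK iKH *.
have sG'K : [~: G, G] \subset K.
  apply: der1_min (normal_norm nKG) _; apply/cyclic_abelian/prime_cyclic.
  by rewrite card_quotient ?normal_norm // iGK.
have [z Gz oz] : {z | z \in G & #[z] = q}.
  by apply: Cauchy pr_q _; rewrite -(Lagrange sKG) iGK dvdn_mull.
have odd_z : odd #[z] by rewrite oz.
have cGz : z \in 'C(G).
  have := rcc_expg2_cent loop_L rcc_L sKG sG'K (eq_leq iKH) Gz.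
  by rewrite -!cycle_subG (cycleX2_odd odd_z).
have notKz : z \notin K.
  apply/negP => Kz; have /eqP : <[z]> :=: 1.
    apply: (trivg_env_core loop_L (N := <[z]>%G)).
      by rewrite /= -(cycleX2_odd odd_z) cycle_subG (expg2_index_le2 sHK) ?iKH.
    by rewrite cents_norm // centsC cycle_subG.
  by rewrite cycle_eq1 => /eqP z1; move: pr_q; rewrite -oz z1 order1.
have defG : K * <[z]> = G by apply: mulg_cycle_prime_index; rewrite ?oz.
have H1 : H :=: 1.
  apply: (trivg_env_core loop_L (subxx _)).
  rewrite -defG; apply: mul_subG; first exact/normal_norm/index2_normal.
  rewrite cycle_subG (subsetP (cent_sub H)) //.
  by rewrite (subsetP (centS (subset_trans sHK sKG))).
split; last exact: val_inj.
rewrite -defG abelianM cycle_abelian cycle_subG (subsetP (centS sKG)) //.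
apply/andP; split=> //; apply: cyclic_abelian; apply: prime_cyclic.
by rewrite -(Lagrange sHK) iKH H1 cards1.
Qed.
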